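(* Let $p=p(n)$ and $G\in\mathcal G(n,p)$. If $p=o(n^{-5/4})$, then with high probability $G$ is reconstructible from its $2$-neighbourhoods.
   Context: $\mathcal G(n,p)$ is the Erdős–Rényi random graph on vertex set $[n]$ in which each pair is an edge independently with probability $p$. ''With high probability'' means with probability tending to $1$ as $n\to\infty$. For a graph $G$, a vertex $v$ and an integer $r\ge1$, the $r$-neighbourhood $N_r^{(G)}(v)$ is the subgraph of $G$ induced by the vertices at distance at most $r$ from $v$, considered as a graph rooted at $v$. Graphs $G$ and $H$ have isomorphic $r$-neighbourhoods if there is a bijection $\phi:V(G)\to V(H)$ such that for every $v\in V(G)$ there is a graph isomorphism $N_r^{(G)}(v)\to N_r^{(H)}(\phi(v))$ mapping $v$ to $\phi(v)$. $G$ is reconstructible from its $r$-neighbourhoods if every graph $H$ with $r$-neighbourhoods isomorphic to those of $G$ is isomorphic to $G$. *)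

From HB Require Import structures.
From mathcomp Require Import all_boot all_order all_algebra.
From mathcomp Require Import all_classical all_reals all_analysis.
Set Implicit Arguments. Unset Strict Implicit. Unset Printing Implicit Defensive.
Import Order.TTheory GRing.Theory Num.Theory.

Definition simple_graph (T : finType) (g : rel T) : Prop :=
  (forall x y, g x y = g y x) /\ (forall x, g x x = false).

Fixpoint within (T : finType) (g : rel T) (r : nat) (v x : T) : bool :=
  match r with
  | 0 => x == v
  | r'.+1 => within g r' v x || [exists y, within g r' v y && g y x]
  end.

Definition rooted_nbhd_iso (T T' : finType) (g : rel T) (h : rel T') (r : nat)
  (v : T) (w : T') : Prop :=
  exists f : T -> T',
    [/\ f v = w,
        {in within g r v, forall x, within h r w (f x)},
        {in within g r v &, injective f},
        {in within h r w, forall y, exists2 x, within g r v x & f x = y}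
      & {in within g r v &, forall x y, g x y = h (f x) (f y)}].

Definition iso_nbhds (T T' : finType) (g : rel T) (h : rel T') (r : nat) : Prop :=
  exists phi : T -> T', bijective phi /\
    forall v, rooted_nbhd_iso g h r v (phi v).

Definition graph_iso (T T' : finType) (g : rel T) (h : rel T') : Prop :=
  exists phi : T -> T', bijective phi /\ forall x y, g x y = h (phi x) (phi y).

Definition reconstructible (T : finType) (g : rel T) (r : nat) : Prop :=
  forall (T' : finType) (h : rel T'), simple_graph h ->
    iso_nbhds g h r -> graph_iso g h.

Definition pairs (n : nat) : {set 'I_n * 'I_n} := [set e : 'I_n * 'I_n | (e.1 < e.2)%N].

Definition graph_of (n : nat) (E : {set 'I_n * 'I_n}) : rel 'I_n :=
  fun x y => ((x, y) \in E) || ((y, x) \in E).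

Definition gnp_prob (R : pzRingType) (n : nat) (p : R) (P : rel 'I_n -> Prop) : R :=
  \sum_(E : {set 'I_n * 'I_n} | (E \subset pairs n) && `[< P (graph_of E) >])
     p ^+ #|E| * (1 - p) ^+ (#|pairs n| - #|E|).
Arguments gnp_prob {R} n p P.

(* Call u a hub if its 2-ball equals its 1-ball or u has two
   distinct neighbours.  In a graph with no path on five vertices (P5-free) the
   2-ball of a hub is a union of components, and every vertex lies in the
   2-ball of some hub.  Both properties are seen by the 2-neighbourhoods, so
   if H has the 2-neighbourhoods of a P5-free G then H is P5-free too.  Start
   with a bijection matching all rooted 2-neighbourhoods and grow a closed set
   P on which it is an isomorphism: absorb the 2-ball of a hub near a missing
   vertex, re-pairing the bijection by transpositions so that it agrees with
   the neighbourhood isomorphism of that ball.  When P is everything, G and H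
   are isomorphic.  Hence P5-free graphs are reconstructible.

   A fixed set of k potential edges is present with probability
   p^k; by the first-moment bound, G(n,p) contains a path on five vertices with
   probability at most n^5 p^4 = (p n^(5/4))^4, which tends to 0. *)

From HB Require Import structures.
From mathcomp Require Import all_boot all_order all_algebra perm.
From mathcomp Require Import all_classical all_reals all_analysis.
Set Implicit Arguments. Unset Strict Implicit. Unset Printing Implicit Defensive.

Section Balls.
Variables (T : finType) (g : rel T).

Lemma within_self r v : within g r v v.
Proof. by elim: r => [|r IH] /=; rewrite ?eqxx ?IH. Qed.

Lemma within_mono r v x : within g r v x -> within g r.+1 v x.
Proof. by move=> vx /=; rewrite vx. Qed.

Lemma within1P v x : reflect (x = v \/ g v x) (within g 1 v x).
Proof.
apply: (iffP orP) => [[/eqP|/existsP[y /andP[/eqP-> vx]]]|[->|vx]]; auto.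
by right; apply/existsP; exists v; rewrite eqxx.
Qed.

Lemma within2P v x :
  reflect (within g 1 v x \/ exists2 y, g v y & g y x) (within g 2 v x).
Proof.
apply: (iffP orP) => [[|/existsP[y /andP[/within1P[->|vy] yx]]]|[|[y vy yx]]].
- by left.
- by left; apply/within1P; right.
- by right; exists y.
- by left.
- by right; apply/existsP; exists y; rewrite yx andbT; apply/within1P; right.
Qed.

Lemma adj_within2 v x : g v x -> within g 2 v x.
Proof. by move=> vx; apply/within2P; left; apply/within1P; right. Qed.

Lemma path_within2 v y x : g v y -> g y x -> within g 2 v x.
Proof. by move=> vy yx; apply/within2P; right; exists y. Qed.

End Balls.

Section ClosedSets.
Variables (T : finType) (g : rel T).
Hypothesis sg : simple_graph g.

Lemma adj_sym x y : g x y = g y x. Proof. by case: sg. Qed.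

Lemma adj_neq x y : g x y -> x != y.
Proof. by case: sg => _ irr; apply: contraTneq => ->; rewrite irr. Qed.

Definition closedS (S : pred T) := forall x y, S x -> g x y -> S y.

Lemma closed_within S r v x : closedS S -> S v -> within g r v x -> S x.
Proof.
move=> clS Sv; elim: r x => [|r IH] x /=; first by move/eqP->.
by case/orP => [/IH //|/existsP[y /andP[/IH Sy yx]]]; apply: clS Sy yx.
Qed.

Lemma closed_within_center S r v x : closedS S -> within g r v x -> S x -> S v.
Proof.
move=> clS; elim: r x => [|r IH] x /=; first by move/eqP->.
case/orP => [/IH //|/existsP[y /andP[vy yx]] Sx]; apply: (IH y vy).
by apply: clS Sx _; rewrite adj_sym.
Qed.

Lemma closed_nonedge S x y : closedS S -> S x -> ~~ S y -> g x y = false.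
Proof. by move=> clS Sx; apply: contraNF; apply: clS. Qed.

Lemma closedU S1 S2 : closedS S1 -> closedS S2 -> closedS (fun x => S1 x || S2 x).
Proof.
move=> cl1 cl2 x y /orP[S1x|S2x] xy; apply/orP.
  by left; apply: cl1 S1x xy.
by right; apply: cl2 S2x xy.
Qed.

Definition P5free := forall a b c d e, uniq [:: a; b; c; d; e] ->
  g a b -> g b c -> g c d -> g d e -> False.

(* A hub is a vertex whose 2-ball is its 1-ball, or which has two distinct
   neighbours: in a P5-free graph the 2-ball of a hub is a union of components. *)
Definition hub u := (forall x, within g 2 u x -> within g 1 u x) \/
  exists z1 z2, [/\ z1 != z2, g u z1 & g u z2].

(* Every vertex lies in the 2-ball of some hub: itself, or a middle vertex of
   a shortest path of length two leaving it. *)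
Lemma hub_exists v : exists2 u, hub u & within g 2 u v.
Proof.
case: (boolP [forall x, within g 2 v x ==> within g 1 v x]).
  move=> /forallP ball12.
  by exists v; [rewrite /hub; left=> x; apply/implyP/ball12 | apply: within_self].
case/forallPn => x; rewrite negb_imply => /andP[v2x v1xN].
have [y vy yx] : exists2 y, g v y & g y x.
  by case/within2P: v2x => // v1x; rewrite v1x in v1xN.
exists y; last by apply: adj_within2; rewrite adj_sym.
rewrite /hub; right; exists v, x; split => //; last by rewrite adj_sym.
by apply: contraNneq v1xN => <-; apply: within_self.
Qed.

(* A neighbour y of a vertex x at distance two from the hub u, with y outside
   the 2-ball, would complete a path z u y1 x y on five vertices. *)
Lemma hub_ball_closed u : P5free -> hub u -> closedS (within g 2 u).
Proof.
move=> P5 hu x y ux xy.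
have [u1x|u1xN] := boolP (within g 1 u x).
  case/within1P: u1x => [E|uxe]; last exact: path_within2 xy.
  by apply: adj_within2; rewrite -E.
have [y1 uy1 y1x] : exists2 y1, g u y1 & g y1 x.
  by case/within2P: ux => // u1x; rewrite u1x in u1xN.
case: hu => [ball12|[z1 [z2 [z12 uz1 uz2]]]]; first by rewrite ball12 in u1xN.
have [z uz zy1] : exists2 z, g u z & z != y1.
  by case: (eqVneq z1 y1) => [E|]; [exists z2; rewrite // -E eq_sym | exists z1].
apply/negPn/negP => u2yN; case: (P5 z u y1 x y) => //; last by rewrite adj_sym.
have ne1 a : within g 1 u a -> a != x by move=> u1a; apply: contraTneq u1a => ->.
have ne2 a : within g 1 u a -> a != y.
  by move=> /within_mono u2a; apply: contraTneq u2a => ->.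
have [u1z u1u u1y1] : [/\ within g 1 u z, within g 1 u u & within g 1 u y1].
  by split; apply/within1P; auto.
rewrite /= !inE !negb_or (ne1 _ u1z) (ne1 _ u1u) (ne1 _ u1y1) (ne2 _ u1z).
rewrite (ne2 _ u1u) (ne2 _ u1y1) zy1 (adj_neq uy1) (adj_neq xy) !andbT.
by rewrite eq_sym (adj_neq uz).
Qed.

End ClosedSets.

Lemma rooted_nbhd_iso_sym (T T' : finType) (g : rel T) (h : rel T') r v w :
  rooted_nbhd_iso g h r v w -> rooted_nbhd_iso h g r w v.
Proof.
case=> f [fv fball finj fonto fedge].
pose finv y := if [pick x | within g r v x && (f x == y)] is Some x then x else v.
have finvP y : within h r w y -> within g r v (finv y) /\ f (finv y) = y.
  rewrite /finv => wy; case: pickP => [x /andP[vx /eqP //]|none].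
  by case: (fonto y wy) => x vx fx; move: (none x); rewrite vx fx eqxx.
exists finv; split.
- have [vfw ffw] := finvP w (within_self h r w).
  by apply: finj; rewrite ?ffw ?fv //; apply: within_self.
- by move=> y /finvP[].
- by move=> y1 y2 /finvP[_ fy1] /finvP[_ fy2] eq12; rewrite -fy1 -fy2 eq12.
- move=> x vx; exists (f x); first exact: fball.
  by apply: finj; case: (finvP _ (fball x vx)).
- move=> y1 y2 /finvP[vy1 fy1] /finvP[vy2 fy2].
  by rewrite fedge // fy1 fy2.
Qed.

Lemma rooted_nbhd_iso_trans (T T' T'' : finType) (g : rel T) (h : rel T')
    (k : rel T'') r u v w :
  rooted_nbhd_iso g h r u v -> rooted_nbhd_iso h k r v w -> rooted_nbhd_iso g k r u w.
Proof.
case=> f [fu fball finj fonto fedge]; case=> f' [fv fball' finj' fonto' fedge'].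
exists (f' \o f); split => /=.
- by rewrite fu fv.
- by move=> x ux; apply/fball'/fball.
- by move=> x y ux uy /finj' eq; apply: finj => //; apply: eq; apply: fball.
- move=> z wz; case: (fonto' z wz) => y vy <-.
  by case: (fonto y vy) => x ux <-; exists x.
- by move=> x y ux uy; rewrite fedge // fedge' //; apply: fball.
Qed.

(* The form in which transitivity is used to re-pair vertices: if v and v'
   both match w, and v' matches w', then v matches w'. *)
Lemma rooted_nbhd_iso_zigzag (T T' : finType) (g : rel T) (h : rel T') r v w v' w' :
  rooted_nbhd_iso g h r v w -> rooted_nbhd_iso g h r v' w ->
  rooted_nbhd_iso g h r v' w' -> rooted_nbhd_iso g h r v w'.
Proof.
move=> vw v'w v'w'; apply: (rooted_nbhd_iso_trans vw).
exact: rooted_nbhd_iso_trans (rooted_nbhd_iso_sym v'w) v'w'.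
Qed.

Section Transfer.
Variables (T T' : finType) (g : rel T) (h : rel T').
Hypothesis sh : simple_graph h.

Lemma hub_transfer u w : rooted_nbhd_iso g h 2 u w -> hub g u -> hub h w.
Proof.
case=> f [fu fball finj fonto fedge] [ball12|[z1 [z2 [z12 uz1 uz2]]]].
  left => y wy; case: (fonto y wy) => x ux <-.
  case/within1P: (ball12 x ux) => [->|uxe]; apply/within1P; first by left.
  by right; rewrite -fu -fedge //; apply: within_self.
have [u2u u2z1 u2z2] := And3 (within_self g 2 u) (adj_within2 uz1) (adj_within2 uz2).
right; exists (f z1), (f z2); rewrite -fu -!fedge //.
by split => //; apply: contra_neq z12; apply: finj.
Qed.

(* A path on five vertices lies in the 2-ball of its middle vertex, so graphs
   with isomorphic 2-neighbourhoods are P5-free together. *)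
Lemma P5free_transfer : iso_nbhds g h 2 -> P5free g -> P5free h.
Proof.
case=> phi [[phinv _ phiK] iso] P5 a b c d e uq ab bc cd de.
have := iso (phinv c); rewrite phiK => /rooted_nbhd_iso_sym[f [_ fball finj _ fedge]].
have ball_c : {subset [:: a; b; c; d; e] <= within h 2 c}.
  move=> x; rewrite !inE => /or4P[|||/orP[]] /eqP->.
  - by apply: (path_within2 (y := b)); rewrite adj_sym.
  - by apply: adj_within2; rewrite adj_sym.
  - exact: within_self.
  - exact: adj_within2.
  - exact: path_within2 de.
apply: (P5 (f a) (f b) (f c) (f d) (f e)); rewrite -?fedge //;
  try by apply: ball_c; rewrite !inE eqxx ?orbT.
rewrite -[[:: f a; _; _; _; _]]/(map f [:: a; b; c; d; e]) map_inj_in_uniq //.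
by move=> x y /ball_c cx /ball_c cy; apply: finj.
Qed.

Lemma within_closed_iso (S : pred T) (S' : pred T') (f : T -> T') :
  closedS g S -> closedS h S' -> {in S, forall x, S' (f x)} ->
  {in S &, injective f} -> {in S', forall y, exists2 x, S x & f x = y} ->
  {in S &, forall x y, g x y = h (f x) (f y)} ->
  forall r v x, S v -> S x -> within g r v x = within h r (f v) (f x).
Proof.
move=> clS clS' fS finj fonto fedge r v x Sv; elim: r x => [|r IH] x Sx /=.
  by apply/eqP/eqP => [->|]; last apply: finj.
rewrite IH //; congr (_ || _).
apply/existsP/existsP => [[y /andP[vy yx]]|[y' /andP[vy' y'x]]].
  have Sy : S y := closed_within clS Sv vy.
  by exists (f y); rewrite -IH // vy -fedge.
have S'y' : S' y' by apply: (clS' (f x)); [apply: fS | rewrite (adj_sym sh)].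
case: (fonto y' S'y') => y Sy fy; subst y'.
by exists y; rewrite IH // vy' fedge.
Qed.

Lemma closed_iso_rooted (S : pred T) (S' : pred T') (f : T -> T') :
  closedS g S -> closedS h S' -> {in S, forall x, S' (f x)} ->
  {in S &, injective f} -> {in S', forall y, exists2 x, S x & f x = y} ->
  {in S &, forall x y, g x y = h (f x) (f y)} ->
  forall r v, S v -> rooted_nbhd_iso g h r v (f v).
Proof.
move=> clS clS' fS finj fonto fedge r v Sv.
have ball := within_closed_iso clS clS' fS finj fonto fedge r Sv.
have inS x : within g r v x -> S x by apply: closed_within clS Sv.
exists f; split => //.
- by move=> x vx; rewrite -ball ?inS.
- by move=> x y /inS Sx /inS Sy; apply: finj.
- move=> y fvy; have S'y := closed_within clS' (fS v Sv) fvy.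
  by case: (fonto y S'y) => x Sx fx; exists x; rewrite // ball // fx.
- by move=> x y /inS Sx /inS Sy; apply: fedge.
Qed.

End Transfer.

Section Realign.
Variables (T T' : finType) (R : T -> T' -> Prop).
Hypothesis zigzag : forall v w v' w', R v w -> R v' w -> R v' w' -> R v w'.

(* Composing with a transposition, a bijection respecting R can be made to send
   c to any R-partner y of c, changing only the images of c and of psi^-1 y. *)
Lemma realign_one (psi : T -> T') c y :
  bijective psi -> (forall v, R v (psi v)) -> R c y ->
  exists psi', [/\ bijective psi', forall v, R v (psi' v), psi' c = y
    & forall x, x != c -> psi x != y -> psi' x = psi x].
Proof.
case=> psiV psiK psiVK Rpsi Rcy; set c' := psiV y.
exists (psi \o tperm c c'); split => /=.
- by apply: bij_comp; [exists psiV | exists (tperm c c'); apply: tpermK].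
- move=> v; case: tpermP => [->|->|_ _ //]; rewrite /c' ?psiVK //.
  by apply: (zigzag _ Rcy (Rpsi c)); have := Rpsi (psiV y); rewrite psiVK.
- by rewrite tpermL psiVK.
- move=> x xc psixy; have c'x : c' != x.
    by apply: contraNneq psixy => <-; rewrite /c' psiVK.
  by rewrite tpermD // eq_sym.
Qed.

Lemma realign (psi : T -> T') (A : {set T}) (f : T -> T') :
  bijective psi -> (forall v, R v (psi v)) ->
  {in A &, injective f} -> {in A, forall x, R x (f x)} ->
  exists psi', [/\ bijective psi', forall v, R v (psi' v) & {in A, psi' =1 f}].
Proof.
move=> bpsi Rpsi finj Rf.
suff [psi' [b' R' E']] : exists psi', [/\ bijective psi', forall v, R v (psi' v)
                                        & {in enum A, psi' =1 f}].
  by exists psi'; split => // x xA; apply: E'; rewrite mem_enum.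
have : {subset enum A <= A} by move=> x; rewrite mem_enum.
elim: (enum A) => [|c s IH] sA; first by exists psi.
have cA : c \in A by apply: sA; rewrite inE eqxx.
have [psi1 [b1 R1 E1]] : exists psi1, [/\ bijective psi1, forall v, R v (psi1 v)
                                         & {in s, psi1 =1 f}].
  by apply: IH => x xs; apply: sA; rewrite inE xs orbT.
have [psi2 [b2 R2 psi2c E2]] := realign_one b1 R1 (Rf c cA).
exists psi2; split => // x; rewrite inE => /predU1P[->//|xs].
have [->//|xc] := eqVneq x c.
have xA : x \in A by apply: sA; rewrite inE xs orbT.
rewrite E2 // E1 //; apply: contra_neq xc; exact: finj.
Qed.

End Realign.

Section Reconstruction.
Variables (T T' : finType) (g : rel T) (h : rel T').
Hypotheses (sg : simple_graph g) (sh : simple_graph h).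
Hypotheses (P5g : P5free g) (P5h : P5free h).

(* The invariant of the reconstruction: psi is a bijection matching all rooted
   2-neighbourhoods, and an isomorphism from the closed set P onto the closed
   set psi @: P. *)
Definition partial_iso (P : {set T}) (psi : T -> T') :=
  [/\ bijective psi, forall v, rooted_nbhd_iso g h 2 v (psi v),
      closedS g (fun x => x \in P), closedS h (fun y => y \in psi @: P)
    & {in P &, forall x y, g x y = h (psi x) (psi y)}].

(* A partial isomorphism can be glued with a matching f of a further closed
   set B onto a closed set disjoint from the old image; no edges run between
   the pieces, so the glued map is an isomorphism on P :|: B. *)
Lemma partial_iso_glue P psi (B : {set T}) (f : T -> T') :
  partial_iso P psi ->
  closedS g (fun x => x \in B) -> closedS h (fun y => y \in f @: B) ->
  {in B, forall x, x \notin P} -> {in B, forall x, f x \notin psi @: P} ->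
  {in B &, injective f} -> {in B, forall x, rooted_nbhd_iso g h 2 x (f x)} ->
  {in B &, forall x y, g x y = h (f x) (f y)} ->
  exists psi', partial_iso (P :|: B) psi'.
Proof.
case=> bpsi Rpsi clP clPh eP clB clBh BnP fBnP finj Rf eB.
pose F x := if x \in P then psi x else f x.
have FP : {in P, F =1 psi} by move=> x xP; rewrite /F xP.
have FB : {in B, F =1 f} by move=> x xB; rewrite /F (negbTE (BnP x xB)).
have Finj : {in P :|: B &, injective F}.
  move=> x y; rewrite !inE => /orP[xP|xB] /orP[yP|yB].
  - by rewrite !FP //; apply: bij_inj.
  - by rewrite FP // FB // => E; have := fBnP y yB; rewrite -E imset_f.
  - by rewrite FB // FP // => E; have := fBnP x xB; rewrite E imset_f.
  - by rewrite !FB //; apply: finj.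
have RF : {in P :|: B, forall x, rooted_nbhd_iso g h 2 x (F x)}.
  by move=> x; rewrite inE => /orP[xP|xB]; [rewrite FP | rewrite FB //; apply: Rf].
have [psi' [b' R' E']] := realign (@rooted_nbhd_iso_zigzag _ _ g h 2) bpsi Rpsi Finj RF.
have E'P : {in P, psi' =1 psi} by move=> x xP; rewrite E' ?FP // inE xP.
have E'B : {in B, psi' =1 f} by move=> x xB; rewrite E' ?FB // inE xB orbT.
have img : psi' @: (P :|: B) = psi @: P :|: f @: B.
  by rewrite imsetU (eq_in_imset E'P) (eq_in_imset E'B).
exists psi'; split => //.
- by move=> x y; rewrite !finset.in_setU; exact: (closedU clP clB).
- by rewrite img => x y; rewrite !finset.in_setU; exact: (closedU clPh clBh).
- move=> x y; rewrite !inE => /orP[xP|xB] /orP[yP|yB].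
  + by rewrite !E'P //; apply: eP.
  + rewrite E'P // E'B // (closed_nonedge clP xP (BnP y yB)).
    by rewrite (closed_nonedge clPh (imset_f psi xP) (fBnP y yB)).
  + rewrite E'B // E'P // (adj_sym sg) (adj_sym sh).
    rewrite (closed_nonedge clP yP (BnP x xB)).
    by rewrite (closed_nonedge clPh (imset_f psi yP) (fBnP x xB)).
  + by rewrite !E'B //; apply: eB.
Qed.

(* A vertex v outside P can be absorbed: the 2-ball B of a hub u near v is
   closed, hence disjoint from P, and psi's partner of u supplies a matching of
   B onto the (closed) 2-ball of psi u, which is disjoint from psi @: P. *)
Lemma partial_iso_extend P psi v : partial_iso P psi -> v \notin P ->
  exists2 P' : {set T}, P \proper P' & exists psi', partial_iso P' psi'.
Proof.
move=> piso vP; have [bpsi Rpsi clP clPh _] := piso.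
have [u hu uv] := hub_exists sg v.
have [f [fu fball finj fonto fedge]] := Rpsi u.
have cl_u := hub_ball_closed sg P5g hu.
have cl_fu := hub_ball_closed sh P5h (hub_transfer (Rpsi u) hu).
pose B := [set x | within g 2 u x].
have imB : f @: B =i within h 2 (psi u).
  move=> y; apply/imsetP/idP => [[x + ->]|/fonto[x ux <-]].
    by rewrite inE; apply: fball.
  by exists x; rewrite ?inE.
have uP : u \notin P by apply: contra vP => uP; apply: closed_within clP uP uv.
have BnP : {in B, forall x, x \notin P}.
  by move=> x; rewrite inE => ux; apply: contra uP; apply: closed_within_center clP ux.
have fBnP : {in B, forall x, f x \notin psi @: P}.
  move=> x; rewrite inE => ux; apply: contra uP.
  move/(closed_within_center sh clPh (fball x ux)).
  by rewrite mem_imset //; apply: bij_inj.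
have [psi' piso'] : exists psi', partial_iso (P :|: B) psi'.
  apply: (partial_iso_glue (f := f) piso) => //.
  - by move=> x y; rewrite !inE; apply: cl_u.
  - by move=> x y; rewrite !imB; apply: cl_fu.
  - by move=> x y; rewrite !inE; apply: finj.
  - move=> x; rewrite inE.
    exact: (closed_iso_rooted sh cl_u cl_fu fball finj fonto fedge 2).
  - by move=> x y; rewrite !inE; apply: fedge.
exists (P :|: B); last by exists psi'.
by apply: properUl; apply/subsetPn; exists v; rewrite // inE.
Qed.

Lemma partial_iso_complete P psi : partial_iso P psi -> graph_iso g h.
Proof.
have [n] := ubnP #|~: P|; elim: n P psi => // n IH P psi ltPn piso.
case: (pickP [pred v | v \notin P]) => [v /= vP|allP].
  have [P' ltPP' [psi' piso']] := partial_iso_extend piso vP.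
  apply: (IH P' psi') => //; rewrite -ltnS; apply: leq_trans ltPn.
  by rewrite ltnS proper_card // properC.
case: piso => bpsi _ _ _ eP; exists psi; split => // x y.
by apply: eP; apply: negbFE; apply: allP.
Qed.

End Reconstruction.

(* Start from the matching phi of neighbourhoods,
   viewed as a partial isomorphism on the empty set. *)
Theorem P5free_reconstructible (T : finType) (g : rel T) :
  simple_graph g -> P5free g -> reconstructible g 2.
Proof.
move=> sg P5g T' h sh niso; have P5h := P5free_transfer sh niso P5g.
case: niso => phi [bphi Rphi].
apply: (partial_iso_complete sg sh P5g P5h (P := finset.set0) (psi := phi)).
by split => // x y; rewrite ?imset0 inE.
Qed.

Local Open Scope ring_scope.
Import Order.TTheory GRing.Theory Num.Theory.

Section EdgeSetWeights.
Variables (R : comPzRingType) (I : finType) (N : {set I}) (p : R).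

Definition edge_weight (E : {set I}) : R := p ^+ #|E| * (1 - p) ^+ (#|N| - #|E|).

(* All edges of S are present with probability p^|S|: expand
   \prod_(i in N) (p + (1 - p)) with the factors i in S replaced by p. *)
Lemma edge_weight_supersets (S : {set I}) : S \subset N ->
  \sum_(E : {set I} | (E \subset N) && (S \subset E)) edge_weight E = p ^+ #|S|.
Proof.
move=> SN.
pose F i := if i \in N then p else 0.
pose G i := if i \in N then (if i \in S then 0 else 1 - p) else 1.
have prodFG : \prod_i (F i + G i) = p ^+ #|S|.
  rewrite -prodr_const [RHS]big_mkcond /=; apply: eq_bigr => i _.
  rewrite /F /G; case: (boolP (i \in S)) => iS.
    by rewrite (fintype.subsetP SN i iS) addr0.
  by case: (i \in N); rewrite ?subrKC ?add0r.
rewrite -prodFG bigA_distr big_mkcond /=; apply: eq_bigr => J _.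
case: (boolP ((J \subset N) && (S \subset J))) => [/andP[JN SJ]|].
  have splitJ i : (if i \in J then F i else G i) =
      (if i \in J then p else 1) * (if i \in N :\: J then 1 - p else 1).
    rewrite /F /G finset.in_setD; case: (boolP (i \in J)) => iJ /=.
      by rewrite (fintype.subsetP JN i iJ) mulr1.
    have iS : i \notin S by apply: contra iJ; apply: (fintype.subsetP SJ).
    by rewrite (negbTE iS) mul1r.
  under eq_bigr => i _ do rewrite splitJ.
  rewrite big_split /= -!big_mkcond /= !prodr_const cardsD.
  by rewrite (finset.setIidPr JN).
case/nandP => /fintype.subsetPn[i iJ iN].
  by rewrite (bigD1 i) //= iJ /F (negbTE iN) mul0r.
by rewrite (bigD1 i) //= (negbTE iN) /G (fintype.subsetP SN i iJ) iJ mul0r.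
Qed.

End EdgeSetWeights.

Section FirstMoment.
Variables (R : realDomainType) (I : finType) (N : {set I}) (p : R).
Hypothesis p01 : 0 <= p <= 1.

Lemma edge_weight_ge0 E : 0 <= edge_weight N p E.
Proof. by case/andP: p01 => p0 p1; rewrite mulr_ge0 ?exprn_ge0 ?subr_ge0. Qed.

Lemma edge_weight_total : \sum_(E : {set I} | E \subset N) edge_weight N p E = 1.
Proof.
rewrite -(expr0 p) -(finset.cards0 I) -(edge_weight_supersets p (finset.sub0set N)).
by apply: eq_bigl => E; rewrite finset.sub0set andbT.
Qed.

Lemma edge_prob_le1 (Q : pred {set I}) :
  \sum_(E : {set I} | (E \subset N) && Q E) edge_weight N p E <= 1.
Proof.
rewrite -edge_weight_total [X in _ <= X](bigID Q) /= lerDl.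
by apply: sumr_ge0 => E _; apply: edge_weight_ge0.
Qed.

Lemma first_moment_bound (J : finType) (ok : pred J) (W : J -> {set I})
    (Q : pred {set I}) :
  (forall j, ok j -> W j \subset N) ->
  (forall E : {set I}, E \subset N -> ~~ Q E ->
     exists2 j, ok j & W j \subset E) ->
  1 - \sum_(j | ok j) p ^+ #|W j|
    <= \sum_(E : {set I} | (E \subset N) && Q E) edge_weight N p E.
Proof.
move=> WN witness; have total := edge_weight_total; rewrite (bigID Q) /= in total.
rewrite -total lerBlDr lerD2l big_mkcondr /=.
apply: (le_trans (y := \sum_(E : {set I} | E \subset N)
  \sum_(j | ok j) (if W j \subset E then edge_weight N p E else 0))).
  apply: ler_sum => E EN; case: ifPn => [notQ|_]; last first.
    by apply: sumr_ge0 => j _; case: ifP => // _; apply: edge_weight_ge0.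
  have [j oj WE] := witness E EN notQ; rewrite (bigD1 j) //= WE lerDl.
  by apply: sumr_ge0 => i _; case: ifP => // _; apply: edge_weight_ge0.
rewrite exchange_big /=; apply: ler_sum => j oj.
by rewrite -big_mkcondr edge_weight_supersets ?WN.
Qed.

End FirstMoment.

Section PathsInGnp.
Variable n : nat.

Definition upair (x y : 'I_n) : 'I_n * 'I_n := if (x < y)%N then (x, y) else (y, x).

Lemma upair_pairs x y : x != y -> upair x y \in pairs n.
Proof.
rewrite /upair inE => xy; case: ifP => // /negbT; rewrite -leqNgt /= => yx.
by rewrite ltn_neqAle yx andbT eq_sym; apply: xy.
Qed.

Lemma upair_inj x y z u : upair x y = upair z u -> (x = z /\ y = u) \/ (x = u /\ y = z).
Proof. by rewrite /upair; do 2 case: ifP => _; case=> -> ->; auto. Qed.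

Lemma graph_of_upair (E : {set 'I_n * 'I_n}) x y :
  E \subset pairs n -> graph_of E x y -> upair x y \in E.
Proof.
rewrite /graph_of /upair => EN /orP[xyE|yxE].
  by have := fintype.subsetP EN _ xyE; rewrite inE /= => ->.
have := fintype.subsetP EN _ yxE; rewrite inE /= => yx.
by case: ifP => // xy; move: (ltn_trans xy yx); rewrite ltnn.
Qed.

Lemma simple_graph_of (E : {set 'I_n * 'I_n}) :
  E \subset pairs n -> simple_graph (graph_of E).
Proof.
move=> EN; split => [x y|x]; first by rewrite /graph_of orbC.
rewrite /graph_of orbb; apply/negP => xxE.
by have := fintype.subsetP EN _ xxE; rewrite inE /= ltnn.
Qed.

Definition path5 := ('I_n * 'I_n * 'I_n * 'I_n * 'I_n)%type.

Definition path5_ok (t : path5) : bool :=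
  let: (a, b, c, d, e) := t in uniq [:: a; b; c; d; e].

Definition path5_edges (t : path5) : {set 'I_n * 'I_n} :=
  let: (a, b, c, d, e) := t in [set x in [:: upair a b; upair b c; upair c d; upair d e]].

Lemma path5_edges_pairs t : path5_ok t -> path5_edges t \subset pairs n.
Proof.
case: t => [[[[a b] c] d] e] /=; rewrite !inE !negb_or.
move=> /andP[/and4P[ab _ _ _] /andP[/and3P[bc _ _] /andP[/andP[cd _] /andP[de _]]]].
apply/fintype.subsetP => x; rewrite finset.in_set !in_cons in_nil orbF.
by case/or4P => /eqP->; apply: upair_pairs.
Qed.

Lemma card_path5_edges t : path5_ok t -> #|path5_edges t| = 4%N.
Proof.
case: t => [[[[a b] c] d] e] /= uq; rewrite cardsE; apply/card_uniqP.
move: uq; rewrite /= !inE !negb_or.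
move=> /andP[/and4P[ab ac ad ae] /andP[/and3P[bc bd be] /andP[/andP[cd ce] /andP[de _]]]].
rewrite !andbT; apply/and3P; split; [apply/and3P; split| apply/andP; split|];
  apply/eqP => /upair_inj[[E1 E2]|[E1 E2]];
  move: ab ac ad ae bc bd be cd ce de; rewrite ?E1 ?E2 ?eqxx //.
Qed.

Lemma P5free_graph_of (E : {set 'I_n * 'I_n}) : E \subset pairs n ->
  (forall t, path5_ok t -> ~~ (path5_edges t \subset E)) -> P5free (graph_of E).
Proof.
move=> EN noP5 a b c d e uq ab bc cd de.
apply: (negP (noP5 (a, b, c, d, e) uq)); apply/fintype.subsetP => x.
by rewrite !inE => /or4P[] /eqP->; apply: graph_of_upair.
Qed.

End PathsInGnp.

Lemma gnp_reconstructible_bound (R : realType) n (p : R) : 0 <= p <= 1 ->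
  1 - n%:R ^+ 5 * p ^+ 4 <= gnp_prob n p (fun G => reconstructible G 2) <= 1.
Proof.
move=> p01; apply/andP; split; last exact: edge_prob_le1.
apply: le_trans (first_moment_bound p01 (@path5_edges_pairs n) _); last first.
  move=> E EN notQ; case: (pickP [pred t | path5_ok t && (path5_edges t \subset E)]).
    by move=> t /andP[t_ok sub]; exists t.
  move=> none; case/negP: notQ; apply/asboolP.
  apply: (P5free_reconstructible (simple_graph_of EN)).
  apply: (P5free_graph_of EN).
  by move=> t t_ok; apply/negP => sub; have := none t; rewrite /= t_ok sub.
have card_path5 : #|{: path5 n}| = (n ^ 5)%N.
  by rewrite !card_prod !card_ord !expnS expn0 muln1 !mulnA.
rewrite lerD2l lerN2 (eq_bigr (fun=> p ^+ 4)) => [|t /card_path5_edges ->//].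
apply: (le_trans (y := \sum_(t : path5 n) p ^+ 4)).
  rewrite [X in _ <= X](bigID (@path5_ok n)) /= lerDl.
  by apply: sumr_ge0 => t _; case/andP: p01 => p0 _; apply: exprn_ge0.
by rewrite sumr_const card_path5 -natrX mulr_natl.
Qed.

Import numFieldTopology.Exports.
Local Open Scope classical_set_scope.

Lemma cvg_exprn (R : realType) (u : nat -> R) (l : R) k :
  u @ \oo --> l -> (fun n => u n ^+ k) @ \oo --> l ^+ k.
Proof.
move=> ul; elim: k => [|k IH].
  by rewrite expr0 (_ : (fun n => u n ^+ 0) = fun=> 1); [apply: cvg_cst | apply/funext].
rewrite exprS (_ : (fun n => u n ^+ k.+1) = u \* (fun n => u n ^+ k)).
  exact: cvgM.
by apply/funext => n; rewrite /= exprS.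
Qed.

Lemma scaled_density_pow4 (R : realType) (n : nat) (p : R) :
  (p * n%:R `^ (5 / 4 : R)) ^+ 4 = n%:R ^+ 5 * p ^+ 4.
Proof.
rewrite exprMn mulrC; congr (_ * _).
rewrite -[LHS](@powR_mulrn _ _ 4) ?powR_ge0 // -powRrM -(@powR_mulrn _ _ 5) ?ler0n //.
by congr (_ `^ _); rewrite -mulrA mulVf ?mulr1 // pnatr_eq0.
Qed.

Theorem theorem1p5 (R : realType) (p : nat -> R) :
  (forall n, 0 <= p n <= 1) ->
  p n * (n%:R `^ (5 / 4 : R)) @[n --> \oo] --> (0 : R) ->
  gnp_prob n (p n) (fun G => reconstructible G 2) @[n --> \oo] --> (1 : R).
Proof.
move=> p01 scaled0.
have pow4_0 := cvg_exprn (k := 4) scaled0; rewrite expr0n /= in pow4_0.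
apply: (@squeeze_cvgr _ _ _ _ (fun n => 1 - (p n * n%:R `^ (5 / 4 : R)) ^+ 4) (fun=> 1)).
- apply: nearW => n; rewrite scaled_density_pow4.
  exact: gnp_reconstructible_bound (p01 n).
- by rewrite -[X in _ --> X]subr0; apply: cvgB; [apply: cvg_cst | apply: pow4_0].
- exact: cvg_cst.
Qed.
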